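(* Let $q\in\mathbb{N}$, $q\geq3$, let $n\ge1$ and $a_1,\dots,a_n\in\mathbb{Q}\cap[0,q-1]$, and let $K$ be the attractor of the iterated function system $\{f_i(x)=\frac{x+a_i}{q}\}_{i=1}^n$, i.e. the unique nonempty compact set with $K=\bigcup_{i=1}^n f_i(K)$. Suppose $K$ is nowhere dense in $[0,1]$. Then for every $t\in(0,1)$ that has a universal $q$-adic expansion, $$K-t\subset\mathbb{Q}^c,\qquad K+t\subset\mathbb{Q}^c,\qquad \frac{K}{t}\subset\mathbb{Q}^c.$$ Moreover, for every $t\in(1,\infty)$ such that $1/t$ has a universal $q$-adic expansion, $tK\subset\mathbb{Q}^c$.
   Context: A $q$-adic expansion of $t\in(0,1)$ is a sequence $(t_k)\in\{0,1,\dots,q-1\}^{\mathbb{N}}$ with $t=\sum_{k\geq1}t_k q^{-k}$. Such an expansion is universal if for every $k\geq1$ and every word $x_1\cdots x_k\in\{0,\dots,q-1\}^k$ there is $k_0\in\mathbb{N}$ with $t_{k_0+1}\cdots t_{k_0+k}=x_1\cdots x_k$; $t$ has a universal $q$-adic expansion if some $q$-adic expansion of it is universal. Notation: $K\pm t=\{x\pm t:x\in K\}$, $tK=\{tx:x\in K\setminus\{0\}\}$, $\frac{K}{t}=\{t^{-1}x:x\in K\setminus\{0\}\}$. $\mathbb{Q}^c$ denotes the set of irrational real numbers. *)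

From Stdlib Require Import Reals QArith Lra Lia.
From Stdlib Require Export Reals QArith Rtopology.
Open Scope R_scope.

Definition irrational (x : R) : Prop := forall r : Q, x <> Q2R r.

(* (d 1, d 2, ...) is a q-adic expansion of t: digits in {0,..,q-1} and
   t = sum_{k>=1} d_k q^{-k}.  (d 0 is unused.) *)
Definition qadic_expansion (q : nat) (d : nat -> nat) (t : R) : Prop :=
  (forall k, (1 <= k)%nat -> (d k < q)%nat) /\
  infinite_sum (fun k => INR (d (S k)) / (INR q ^ (S k))) t.

Definition universal_seq (q : nat) (d : nat -> nat) : Prop :=
  forall (k : nat) (w : nat -> nat), (1 <= k)%nat ->
    (forall i, (1 <= i <= k)%nat -> (w i < q)%nat) ->
    exists k0 : nat, forall i, (1 <= i <= k)%nat -> d (k0 + i)%nat = w i.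

Definition has_universal_expansion (q : nat) (t : R) : Prop :=
  exists d, qadic_expansion q d t /\ universal_seq q d.

Definition is_attractor (q n : nat) (a : nat -> Q) (K : R -> Prop) : Prop :=
  (exists x, K x) /\ compact K /\
  forall y, K y <-> exists i x, (i < n)%nat /\ K x /\ y = (x + Q2R (a i)) / INR q.

Definition nowhere_dense_in01 (K : R -> Prop) : Prop :=
  ~ exists U : R -> Prop, open_set U /\ (exists x, U x /\ 0 <= x <= 1) /\
      forall x, U x -> 0 <= x <= 1 -> adherence K x.

From Stdlib Require Import Reals QArith Qreals Rtopology Lra Lia ZArith Classical.
Open Scope R_scope.

(* All four claims follow from one fact
   ([no_rational_affine_point]): if t has a universal q-adic expansion (d_k),
   then no x in K equals al t + be with al, be rational and al <> 0.

   Suppose it did, and let T_k = q^k t - (d_1 ... d_k)_q in [0,1] be the k-th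
   remainder of the expansion.
   (1) K is backward invariant under y |-> q y - a_i, so for every k it contains
       q^k x + M/D (D a common denominator of the a_i, M an integer); this point
       equals al T_k + J/L for an integer J and an L independent of k.
   (2) K is a nowhere dense subset of [0,1], hence so are its finitely many
       relevant affine preimages s |-> al s + J/L; some interval (u, v) inside
       [0,1] avoids all of them.
   (3) Universality makes the remainders T_k dense in [0,1], so some T_k lies in
       (u, v), contradicting (1). *)

Fixpoint word_value (q : nat) (w : nat -> nat) (l : nat) : nat :=
  match l with
  | O => O
  | S l => (q * word_value q w l + w (S l))%nat
  end.

Lemma word_value_ext q w w' l :
  (forall i, (1 <= i <= l)%nat -> w i = w' i) -> word_value q w l = word_value q w' l.
Proof.
  induction l as [|l IH]; intros Hww'; simpl; [reflexivity|].
  rewrite IH by (intros; apply Hww'; lia). rewrite Hww' by lia. reflexivity.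
Qed.

Lemma word_value_lt q w l :
  (forall i, (1 <= i <= l)%nat -> (w i < q)%nat) -> (word_value q w l < q ^ l)%nat.
Proof.
  induction l as [|l IH]; intros Hw; simpl; [lia|].
  specialize (IH ltac:(intros; apply Hw; lia)). specialize (Hw (S l) ltac:(lia)). nia.
Qed.

Lemma word_value_app q w k l :
  word_value q w (k + l) = (q ^ l * word_value q w k + word_value q (fun i => w (k + i)%nat) l)%nat.
Proof.
  induction l as [|l IH]; simpl; [rewrite Nat.add_0_r; lia|].
  rewrite <- plus_n_Sm. simpl. rewrite IH. nia.
Qed.

Lemma word_value_surj q l A : (1 <= q)%nat -> (A < q ^ l)%nat ->
  exists w, (forall i, (1 <= i <= l)%nat -> (w i < q)%nat) /\ word_value q w l = A.
Proof.
  intros Hq. revert A. induction l as [|l IH]; intros A HA.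
  - exists (fun _ => O). simpl in *. split; [intros; lia | lia].
  - assert (Hdiv : (A / q < q ^ l)%nat).
    { apply Nat.Div0.div_lt_upper_bound. simpl in HA. lia. }
    destruct (IH _ Hdiv) as [w [Hw Hval]].
    exists (fun i => if Nat.eqb i (S l) then (A mod q)%nat else w i). split.
    + intros i Hi. destruct (Nat.eqb_spec i (S l)).
      * apply Nat.mod_upper_bound. lia.
      * apply Hw. lia.
    + simpl. rewrite Nat.eqb_refl, (word_value_ext q _ w), Hval.
      * symmetry. apply Nat.div_mod. lia.
      * intros i Hi. destruct (Nat.eqb_spec i (S l)); [lia | reflexivity].
Qed.

Lemma limit_within (u : nat -> R) (l A B : R) (N0 : nat) :
  Un_cv u l -> (forall n, (N0 <= n)%nat -> A <= u n <= B) -> A <= l <= B.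
Proof.
  intros Hcv Hu. split; apply Rnot_lt_le; intro Hout.
  - destruct (Hcv (A - l)) as [N HN]; [lra|].
    specialize (HN (N + N0)%nat ltac:(lia)). specialize (Hu (N + N0)%nat ltac:(lia)).
    unfold Rdist in HN. apply Rabs_def2 in HN. lra.
  - destruct (Hcv (l - B)) as [N HN]; [lra|].
    specialize (HN (N + N0)%nat ltac:(lia)). specialize (Hu (N + N0)%nat ltac:(lia)).
    unfold Rdist in HN. apply Rabs_def2 in HN. lra.
Qed.

(* Every nonempty open subinterval (u, v) of [0,1] contains a q-adic interval
   [A/q^l, (A+1)/q^l] of some generation l >= 1 (taken with q^l (v - u) > 2). *)
Lemma qadic_interval_inside (q : nat) (u v : R) :
  (2 <= q)%nat -> 0 <= u -> u < v -> v <= 1 ->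
  exists l A, (1 <= l)%nat /\ (A < q ^ l)%nat /\
    u * INR q ^ l < INR A /\ INR A + 1 < v * INR q ^ l.
Proof.
  intros Hq Hu Huv Hv.
  destruct (INR_unbounded (2 / (v - u))) as [l Hl].
  assert (Hl2 : 2 < INR l * (v - u)).
  { assert (2 / (v - u) * (v - u) = 2) by (field; lra). nra. }
  assert (HlQ : INR l < INR q ^ l).
  { rewrite <- pow_INR. apply lt_INR, Nat.pow_gt_lin_r. lia. }
  set (Q := INR q ^ l) in *.
  assert (HQ : 0 < Q) by (apply pow_lt, lt_0_INR; lia).
  destruct (archimed (u * Q)) as [Hup1 Hup2].
  assert (Hup0 : (0 <= up (u * Q))%Z) by (apply le_IZR; nra).
  assert (HA : INR (Z.to_nat (up (u * Q))) = IZR (up (u * Q))).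
  { rewrite INR_IZR_INZ, Z2Nat.id; auto. }
  exists l, (Z.to_nat (up (u * Q))). fold Q. rewrite HA.
  repeat split.
  - destruct l; [simpl in Hl2; lra | lia].
  - apply INR_lt. rewrite pow_INR, HA. fold Q. nra.
  - exact Hup1.
  - nra.
Qed.

Section Remainders.

Variable q : nat.
Hypothesis q_ge2 : (2 <= q)%nat.
Variable d : nat -> nat.
Variable t : R.
Hypothesis d_digits : forall k, (1 <= k)%nat -> (d k < q)%nat.
Hypothesis d_sum : infinite_sum (fun k => INR (d (S k)) / INR q ^ S k) t.

Lemma qpow_pos k : 0 < INR q ^ k.
Proof. apply pow_lt, lt_0_INR. lia. Qed.

(* The k-th remainder q^k t - (d_1 ... d_k)_q of the expansion; it is the
   number with expansion (d_{k+1}, d_{k+2}, ...). *)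
Definition remainder (k : nat) : R := INR q ^ k * t - INR (word_value q d k).

Lemma remainder_shift k l :
  remainder k = (INR (word_value q (fun i => d (k + i)%nat) l) + remainder (k + l)) / INR q ^ l.
Proof.
  pose proof (qpow_pos l). unfold remainder.
  rewrite word_value_app, plus_INR, mult_INR, pow_INR, pow_add. field. lra.
Qed.

Lemma partial_sum_value N :
  sum_f_R0 (fun k => INR (d (S k)) / INR q ^ S k) N = INR (word_value q d (S N)) / INR q ^ S N.
Proof.
  induction N as [|N IH]; [simpl; rewrite Nat.mul_0_r; reflexivity|].
  rewrite tech5, IH.
  change (word_value q d (S (S N))) with (q * word_value q d (S N) + d (S (S N)))%nat.
  rewrite plus_INR, mult_INR. simpl pow.
  pose proof (qpow_pos N). pose proof (lt_0_INR q ltac:(lia)).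
  field. split; lra.
Qed.

(* The remainders lie in [0,1], i.e. (d_1 ... d_k)_q <= q^k t <= (d_1 ... d_k)_q + 1:
   every partial sum of index >= k does, and so does the limit. *)
Lemma remainder_bounds k : 0 <= remainder k <= 1.
Proof.
  set (partial := fun N => sum_f_R0 (fun k => INR (d (S k)) / INR q ^ S k) N).
  assert (Hconst : forall c, Un_cv (fun _ => c) c).
  { intros c e He. exists 0%nat. intros. unfold Rdist. rewrite Rminus_diag, Rabs_R0. lra. }
  apply (limit_within (fun N => INR q ^ k * partial N - INR (word_value q d k)) _ _ _ k).
  - apply CV_minus; [apply CV_mult; [apply Hconst | exact d_sum] | apply Hconst].
  - intros N HN. unfold partial. rewrite partial_sum_value.
    replace (S N) with (k + (S N - k))%nat by lia.
    set (j := (S N - k)%nat).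
    assert (HB : (word_value q (fun i => d (k + i)%nat) j < q ^ j)%nat).
    { apply word_value_lt. intros. apply d_digits. lia. }
    apply lt_INR in HB. rewrite pow_INR in HB.
    pose proof (pos_INR (word_value q (fun i => d (k + i)%nat) j)).
    pose proof (qpow_pos k). pose proof (qpow_pos j).
    rewrite word_value_app, plus_INR, mult_INR, pow_INR, pow_add.
    set (B := INR (word_value q (fun i => d (k + i)%nat) j)) in *.
    replace (INR q ^ k * ((INR q ^ j * INR (word_value q d k) + B) / (INR q ^ k * INR q ^ j))
      - INR (word_value q d k)) with (B / INR q ^ j) by (field; lra).
    assert (HBq : B / INR q ^ j * INR q ^ j = B) by (field; lra).
    split; nra.
Qed.

(* Universality of (d_k) makes the remainders dense in [0,1]: choose a q-adic
   interval inside (u, v) and the position k where its digit block occurs. *)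
Lemma remainder_dense : universal_seq q d ->
  forall u v, 0 <= u -> u < v -> v <= 1 -> exists k, u < remainder k < v.
Proof.
  intros Huniv u v Hu Huv Hv.
  destruct (qadic_interval_inside q u v q_ge2 Hu Huv Hv) as [l [A [Hl [HAl [HuA HAv]]]]].
  destruct (word_value_surj q l A ltac:(lia) HAl) as [w [Hw HwA]].
  destruct (Huniv l w Hl Hw) as [k Hk].
  exists k.
  assert (Hblock : word_value q (fun i => d (k + i)%nat) l = A).
  { rewrite <- HwA. apply word_value_ext. exact Hk. }
  pose proof (remainder_shift k l) as Hshift. rewrite Hblock in Hshift.
  pose proof (remainder_bounds (k + l)). pose proof (qpow_pos l).
  assert (HQT : INR q ^ l * remainder k = INR A + remainder (k + l)).
  { rewrite Hshift. field. lra. }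
  split; apply (Rmult_lt_reg_l (INR q ^ l)); lra.
Qed.
End Remainders.

Definition nowhere_dense (E : R -> Prop) : Prop :=
  forall c d, c < d -> exists c' d', c <= c' /\ c' < d' /\ d' <= d /\
    forall y, c' < y < d' -> ~ E y.

(* A subset of [0,1] whose closure has empty interior in [0,1] is nowhere dense
   in R: an interval either misses [0,1], or meets it in (lo, hi) which then
   contains a point outside the closure, hence a small interval avoiding E. *)
Lemma nowhere_dense_of_in01 (E : R -> Prop) :
  (forall y, E y -> 0 <= y <= 1) -> nowhere_dense_in01 E -> nowhere_dense E.
Proof.
  intros Hsub Hnd c d Hcd.
  destruct (Rle_dec d 0) as [Hd0|Hd0].
  { exists c, d. repeat split; try lra. intros y Hy HE. apply Hsub in HE. lra. }
  destruct (Rle_dec 1 c) as [Hc1|Hc1].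
  { exists c, d. repeat split; try lra. intros y Hy HE. apply Hsub in HE. lra. }
  set (lo := Rmax c 0). set (hi := Rmin d 1).
  assert (c <= lo /\ 0 <= lo /\ (lo = c \/ lo = 0)) by (unfold lo, Rmax; destruct Rle_dec; lra).
  assert (hi <= d /\ hi <= 1 /\ (hi = d \/ hi = 1)) by (unfold hi, Rmin; destruct Rle_dec; lra).
  destruct (classic (exists w, lo < w < hi /\ ~ adherence E w)) as [[w [Hw Hna]]|Hall].
  -
    unfold adherence, point_adherent in Hna.
    apply not_all_ex_not in Hna as [V HV].
    apply imply_to_and in HV as [[del Hdel] HV].
    set (e := Rmin del (Rmin (w - c) (d - w))).
    assert (e <= del /\ e <= w - c /\ e <= d - w /\ 0 < e).
    { unfold e, Rmin. pose proof (cond_pos del). repeat destruct Rle_dec; lra. }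
    exists (w - e), (w + e). repeat split; try lra.
    intros y Hy HEy. apply HV. exists y. split; auto. apply Hdel. unfold disc.
    apply Rabs_def1; lra.
  - (* otherwise (lo, hi) is an open subset of [0,1] inside the closure of E *)
    exfalso. apply Hnd. exists (fun y => lo < y < hi). split; [|split].
    + intros x Hx. assert (He : 0 < Rmin (x - lo) (hi - x)) by (unfold Rmin; destruct Rle_dec; lra).
      exists (mkposreal _ He). intros y Hy. unfold disc in Hy. simpl in Hy.
      apply Rabs_def2 in Hy. unfold Rmin in Hy. destruct Rle_dec; lra.
    + exists ((lo + hi) / 2). lra.
    + intros x Hx _. apply NNPP. intro Hna. apply Hall. exists x. auto.
Qed.

Lemma nowhere_dense_subset (E E' : R -> Prop) :
  (forall y, E' y -> E y) -> nowhere_dense E -> nowhere_dense E'.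
Proof.
  intros Hsub HE c d Hcd. destruct (HE c d Hcd) as [c' [d' [H1 [H2 [H3 H4]]]]].
  exists c', d'. repeat split; auto. intros y Hy HE'. apply (H4 y Hy), Hsub, HE'.
Qed.

Lemma nowhere_dense_union (E E' : R -> Prop) :
  nowhere_dense E -> nowhere_dense E' -> nowhere_dense (fun y => E y \/ E' y).
Proof.
  intros HE HE' c d Hcd.
  destruct (HE c d Hcd) as [c1 [d1 [H1 [H2 [H3 H4]]]]].
  destruct (HE' c1 d1 H2) as [c2 [d2 [H5 [H6 [H7 H8]]]]].
  exists c2, d2. repeat split; try lra.
  intros y Hy [HEy|HEy]; [apply (H4 y) | apply (H8 y)]; auto; lra.
Qed.

Lemma nowhere_dense_reflect (E : R -> Prop) :
  nowhere_dense E -> nowhere_dense (fun s => E (- s)).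
Proof.
  intros HE c d Hcd. destruct (HE (- d) (- c) ltac:(lra)) as [c' [d' [H1 [H2 [H3 H4]]]]].
  exists (- d'), (- c'). repeat split; try lra.
  intros s Hs. apply H4. lra.
Qed.

Lemma nowhere_dense_affine_pos (E : R -> Prop) (al b : R) :
  0 < al -> nowhere_dense E -> nowhere_dense (fun s => E (al * s + b)).
Proof.
  intros Hal HE c d Hcd.
  destruct (HE (al * c + b) (al * d + b)) as [c' [d' [H1 [H2 [H3 H4]]]]]; [nra|].
  exists ((c' - b) / al), ((d' - b) / al).
  assert (Hc : (c' - b) / al * al = c' - b) by (field; lra).
  assert (Hd : (d' - b) / al * al = d' - b) by (field; lra).
  repeat split; try nra. intros s Hs. apply H4. nra.
Qed.

Lemma nowhere_dense_affine (E : R -> Prop) (al b : R) :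
  al <> 0 -> nowhere_dense E -> nowhere_dense (fun s => E (al * s + b)).
Proof.
  intros Hal HE. destruct (Rlt_dec 0 al) as [Hpos|Hneg].
  - apply nowhere_dense_affine_pos; assumption.
  - apply (nowhere_dense_subset (fun s => E ((- al) * (- s) + b))).
    + intros s Hs. replace (- al * - s + b) with (al * s + b) by ring. exact Hs.
    + apply (nowhere_dense_reflect (fun s => E (- al * s + b))).
      apply nowhere_dense_affine_pos; [lra | assumption].
Qed.

Lemma nowhere_dense_translates (E : R -> Prop) (al L : R) (N : nat) :
  al <> 0 -> nowhere_dense E ->
  nowhere_dense (fun s => exists J : Z, (Z.abs J <= Z.of_nat N)%Z /\ E (al * s + IZR J / L)).
Proof.
  intros Hal HE. induction N as [|N IH].
  - apply (nowhere_dense_subset (fun s => E (al * s + 0))).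
    + intros s [J [HJ HEJ]]. assert (J = 0%Z) by lia. subst J.
      replace (IZR 0 / L) with 0 in HEJ by (unfold Rdiv; ring). exact HEJ.
    + apply nowhere_dense_affine; assumption.
  - set (b := IZR (Z.of_nat (S N)) / L).
    apply (nowhere_dense_subset
      (fun s => (exists J : Z, (Z.abs J <= Z.of_nat N)%Z /\ E (al * s + IZR J / L))
                \/ (E (al * s + b) \/ E (al * s + - b)))).
    + intros s [J [HJ HEJ]].
      destruct (Z.eq_dec J (Z.of_nat (S N))) as [->|HJ1]; [right; left; exact HEJ|].
      destruct (Z.eq_dec J (- Z.of_nat (S N))) as [->|HJ2].
      * right; right. unfold b. rewrite opp_IZR in HEJ.
        replace (- IZR (Z.of_nat (S N)) / L) with (- (IZR (Z.of_nat (S N)) / L)) in HEJ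
          by (unfold Rdiv; ring). exact HEJ.
      * left. exists J. split; [lia | exact HEJ].
    + apply nowhere_dense_union; [exact IH|].
      apply nowhere_dense_union; apply nowhere_dense_affine; assumption.
Qed.

(* For a nowhere dense E inside [0,1], some nonempty open interval (u, v) of
   [0,1] avoids all the lattice translates al s + J/L, J integer: on [0,1]
   only the finitely many J with |J| <= L (1 + |al|) can hit E. *)
Lemma interval_avoiding_translates (E : R -> Prop) (al L : R) :
  (forall y, E y -> 0 <= y <= 1) -> nowhere_dense E -> al <> 0 -> 0 < L ->
  exists u v, 0 <= u /\ u < v /\ v <= 1 /\
    forall s, u < s < v -> forall J : Z, ~ E (al * s + IZR J / L).
Proof.
  intros Hsub HE Hal HL.
  destruct (INR_unbounded (L * (1 + Rabs al))) as [N HN].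
  destruct (nowhere_dense_translates E al L N Hal HE 0 1 ltac:(lra))
    as [u [v [H1 [H2 [H3 H4]]]]].
  exists u, v. repeat split; auto. intros s Hs J HEJ.
  apply (H4 s Hs). exists J. split; [|exact HEJ].
  apply Z.nlt_ge. intro HJ.
  apply IZR_lt in HJ. rewrite <- INR_IZR_INZ, <- Rabs_Zabs in HJ.
  apply Hsub in HEJ.
  assert (Habs : Rabs (IZR J / L) <= 1 + Rabs al).
  { replace (IZR J / L) with ((al * s + IZR J / L) - al * s) by ring.
    eapply Rle_trans; [apply Rabs_triang|]. rewrite Rabs_Ropp, Rabs_mult, (Rabs_right s) by lra.
    rewrite (Rabs_right (al * s + IZR J / L)) by lra. pose proof (Rabs_pos al). nra. }
  unfold Rdiv in Habs. rewrite Rabs_mult, Rabs_inv, (Rabs_right L) in Habs by lra.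
  assert (Rabs (IZR J) = Rabs (IZR J) * / L * L) by (field; lra).
  nra.
Qed.

(* If each point of a nonempty bounded-above set E is dominated by
   (x + c)/r for some x in E, with r > 1, then E lies below c/(r - 1):
   its supremum s satisfies s <= (s + c)/r. *)
Lemma self_similar_upper_bound (E : R -> Prop) (c r : R) :
  1 < r -> (exists x, E x) -> bound E ->
  (forall y, E y -> exists x, E x /\ y <= (x + c) / r) ->
  forall y, E y -> y <= c / (r - 1).
Proof.
  intros Hr Hne Hbd Hself.
  destruct (completeness E Hbd Hne) as [s [Hub Hleast]].
  assert (Hs : s <= (s + c) / r).
  { apply Hleast. intros y Hy. destruct (Hself y Hy) as [x [Hx Hyx]].
    apply Hub in Hx. apply (Rle_trans _ _ _ Hyx).
    apply Rmult_le_compat_r; [left; apply Rinv_0_lt_compat; lra | lra]. }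
  assert (Hsr : s * r <= s + c).
  { replace (s + c) with ((s + c) / r * r) by (field; lra). apply Rmult_le_compat_r; lra. }
  intros y Hy. apply Hub in Hy.
  apply (Rmult_le_reg_r (r - 1)); [lra|].
  replace (c / (r - 1) * (r - 1)) with c by (field; lra). nra.
Qed.

(* The attractor lies in [0,1] when the digits a_i lie in [0, q-1]: its upper
   part is bounded by (q-1)/(q-1) and its lower part (reflected) by 0/(q-1). *)
Lemma attractor_in_unit_interval (q n : nat) (a : nat -> Q) (K : R -> Prop) :
  (2 <= q)%nat ->
  (forall i, (i < n)%nat -> 0 <= Q2R (a i) <= INR q - 1) ->
  is_attractor q n a K -> forall y, K y -> 0 <= y <= 1.
Proof.
  intros Hq Ha [Hne [Hcpt HK]].
  assert (Hq2 : 2 <= INR q) by (replace 2 with (INR 2) by (simpl; lra); apply le_INR; auto).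
  destruct (compact_P1 _ Hcpt) as [m [M HmM]].
  assert (Hupper : forall y, K y -> y <= (INR q - 1) / (INR q - 1)).
  { apply self_similar_upper_bound; [lra | exact Hne | exists M; intros y Hy; apply HmM, Hy |].
    intros y Hy. apply HK in Hy as [i [x [Hi [Hx ->]]]]. exists x. split; [exact Hx|].
    specialize (Ha i Hi).
    apply Rmult_le_compat_r; [left; apply Rinv_0_lt_compat; lra | lra]. }
  assert (Hlower : forall y, K (- y) -> y <= 0 / (INR q - 1)).
  { apply self_similar_upper_bound; [lra | |exists (- m); intros y Hy; apply HmM in Hy; lra |].
    - destruct Hne as [x Hx]. exists (- x). rewrite Ropp_involutive. exact Hx.
    - intros y Hy. apply HK in Hy as [i [x [Hi [Hx Hxy]]]]. exists (- x).
      rewrite Ropp_involutive. split; [exact Hx|].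
      specialize (Ha i Hi).
      replace y with (- x / INR q - Q2R (a i) / INR q) by (rewrite <- (Ropp_involutive y), Hxy; field; lra).
      unfold Rdiv. rewrite Rmult_plus_distr_r.
      pose proof (Rinv_0_lt_compat (INR q) ltac:(lra)). nra. }
  intros y Hy. split.
  - assert (Hny : K (- - y)) by (rewrite Ropp_involutive; exact Hy).
    apply Hlower in Hny. unfold Rdiv in Hny. rewrite Rmult_0_l in Hny. lra.
  - apply Hupper in Hy. rewrite Rdiv_diag in Hy by lra. exact Hy.
Qed.

Lemma common_denominator (a : nat -> Q) (n : nat) :
  exists D : nat, (0 < D)%nat /\ forall i, (i < n)%nat -> exists z : Z, Q2R (a i) * INR D = IZR z.
Proof.
  induction n as [|n [D [HD Hint]]].
  - exists 1%nat. split; [lia | intros; lia].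
  - exists (D * Pos.to_nat (Qden (a n)))%nat. split; [nia|].
    rewrite mult_INR, (INR_IZR_INZ (Pos.to_nat _)), positive_nat_Z.
    intros i Hi. destruct (Nat.eq_dec i n) as [->|Hne].
    + exists (Qnum (a n) * Z.of_nat D)%Z. rewrite mult_IZR, <- INR_IZR_INZ.
      unfold Q2R. field. apply not_0_IZR. lia.
    + destruct (Hint i ltac:(lia)) as [z Hz]. exists (z * Zpos (Qden (a n)))%Z.
      rewrite mult_IZR, <- Hz. ring.
Qed.

(* Backward invariance: x in K gives q x - a_i in K for some i; iterating, for a
   common denominator D of the a_i, q^k x + M/D lies in K for some integer M. *)
Lemma attractor_orbit (q n : nat) (a : nat -> Q) (K : R -> Prop) (D : nat) :
  (1 <= q)%nat -> (0 < D)%nat ->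
  (forall i, (i < n)%nat -> exists z : Z, Q2R (a i) * INR D = IZR z) ->
  is_attractor q n a K ->
  forall x, K x -> forall k, exists M : Z, K (INR q ^ k * x + IZR M / INR D).
Proof.
  intros Hq HD Hint [_ [_ HK]] x Hx k.
  apply lt_0_INR in HD. assert (Hq0 : 0 < INR q) by (apply lt_0_INR; lia).
  induction k as [|k [M HM]].
  - exists 0%Z. replace (INR q ^ 0 * x + IZR 0 / INR D) with x by (simpl; field; lra). exact Hx.
  - apply HK in HM as [i [z [Hi [Hz Hzeq]]]].
    destruct (Hint i Hi) as [zi Hzi].
    exists (Z.of_nat q * M - zi)%Z.
    replace (INR q ^ S k * x + IZR (Z.of_nat q * M - zi) / INR D) with z; [exact Hz|].
    assert (Hzy : z = INR q * (INR q ^ k * x + IZR M / INR D) - Q2R (a i)).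
    { rewrite Hzeq. field. lra. }
    rewrite Hzy, minus_IZR, mult_IZR, <- INR_IZR_INZ, <- Hzi. simpl pow. field. lra.
Qed.

Lemma no_rational_affine_point (q n : nat) (a : nat -> Q) (K : R -> Prop) (t : R) (al be : Q) :
  (2 <= q)%nat ->
  (forall i, (i < n)%nat -> 0 <= Q2R (a i) <= INR q - 1) ->
  is_attractor q n a K -> nowhere_dense_in01 K ->
  has_universal_expansion q t -> Q2R al <> 0 ->
  forall x, K x -> x <> Q2R al * t + Q2R be.
Proof.
  intros Hq Ha Hatt Hnd [d [[Hdig Hsum] Huniv]] Hal x Hx Hxe.
  pose proof (attractor_in_unit_interval q n a K Hq Ha Hatt) as Hsub.
  destruct (common_denominator a n) as [D [HD Hint]].
  assert (Hda : 0 < IZR (Zpos (Qden al))) by (apply IZR_lt; lia).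
  assert (Hdb : 0 < IZR (Zpos (Qden be))) by (apply IZR_lt; lia).
  assert (HDR : 0 < INR D) by (apply lt_0_INR; exact HD).
  (* points of K reached from x differ from al T_k by a multiple of 1/L *)
  set (L := IZR (Zpos (Qden al)) * IZR (Zpos (Qden be)) * INR D).
  assert (HL : 0 < L) by (unfold L; repeat apply Rmult_lt_0_compat; assumption).
  destruct (interval_avoiding_translates K (Q2R al) L Hsub
    (nowhere_dense_of_in01 K Hsub Hnd) Hal HL) as [u [v [Hu [Huv [Hv Havoid]]]]].
  destruct (remainder_dense q Hq d t Hdig Hsum Huniv u v Hu Huv Hv) as [k Hk].
  destruct (attractor_orbit q n a K D ltac:(lia) HD Hint Hatt x Hx k) as [M HM].
  set (J := (Qnum al * Z.of_nat (word_value q d k) * Zpos (Qden be) * Z.of_nat D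
     + Z.of_nat (q ^ k) * Qnum be * Zpos (Qden al) * Z.of_nat D
     + M * Zpos (Qden al) * Zpos (Qden be))%Z).
  apply (Havoid _ Hk J).
  replace (Q2R al * remainder q d t k + IZR J / L) with (INR q ^ k * x + IZR M / INR D); [exact HM|].
  rewrite Hxe. unfold J, L, remainder.
  rewrite !plus_IZR, !mult_IZR, <- !INR_IZR_INZ, pow_INR.
  unfold Q2R. field. repeat split; lra.
Qed.

Theorem theorem5 (q n : nat) (a : nat -> Q) (K : R -> Prop) :
  (3 <= q)%nat -> (1 <= n)%nat ->
  (forall i, (i < n)%nat -> 0 <= Q2R (a i) <= INR q - 1) ->
  is_attractor q n a K ->
  nowhere_dense_in01 K ->
  (forall t, 0 < t < 1 -> has_universal_expansion q t ->
     (forall x, K x -> irrational (x - t)) /\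
     (forall x, K x -> irrational (x + t)) /\
     (forall x, K x -> x <> 0 -> irrational (x / t))) /\
  (forall t, 1 < t -> has_universal_expansion q (/ t) ->
     forall x, K x -> x <> 0 -> irrational (t * x)).
Proof.
  intros Hq _ Ha Hatt Hnd.
  pose proof (no_rational_affine_point q n a K) as Hkey.
  split.
  - intros t Ht Huniv. repeat split.
    +
      intros x Hx r Hr. apply (Hkey t 1%Q r ltac:(lia) Ha Hatt Hnd Huniv) with x; [| exact Hx |];
        rewrite RMicromega.Q2R_1; lra.
    +
      intros x Hx r Hr. apply (Hkey t (Qopp 1) r ltac:(lia) Ha Hatt Hnd Huniv) with x; [| exact Hx |];
        rewrite Q2R_opp, RMicromega.Q2R_1; lra.
    +
      intros x Hx Hx0 r Hr. apply (Hkey t r 0%Q ltac:(lia) Ha Hatt Hnd Huniv) with x; [| exact Hx |];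
        rewrite <- Hr.
      * intro Hr0. apply Hx0. apply (Rmult_eq_reg_r (/ t)); [|apply Rinv_neq_0_compat; lra].
        unfold Rdiv in Hr0. lra.
      * rewrite RMicromega.Q2R_0. field. lra.
  -
    intros t Ht Huniv x Hx Hx0 r Hr.
    apply (Hkey (/ t) r 0%Q ltac:(lia) Ha Hatt Hnd Huniv) with x; [| exact Hx |];
      rewrite <- Hr.
    + intro Hr0. apply Hx0. apply (Rmult_eq_reg_l t); lra.
    + rewrite RMicromega.Q2R_0. field. lra.
Qed.
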